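(* If $M$ is a finite monoid that is not commutative, then for every stable order $\le$ on $M$, the ordered monoid $(M,\le)$ satisfies $N^1(M)=\Omega(\log n)$.
   Context: A stable order on a monoid $M$ is a partial order with $x\le y\Rightarrow zx\le zy$ and $xz\le yz$ for all $z\in M$. Non-deterministic communication complexity: for $f:X\times Y\to\{0,1\}$, $N^1(f)$ is the minimum cost of a non-deterministic protocol for $f$; equivalently, up to an additive constant 2, $N^1(f)=\log_2 C^1(f)$, where $C^1(f)$ is the minimum number of rectangles $S\times T\subseteq X\times Y$ on which $f\equiv1$ whose union is $f^{-1}(1)$. An order ideal is a subset $I\subseteq M$ with $y\in I, x\le y\Rightarrow x\in I$. For an order ideal $I$, $N^1(M,I)(n)$ is $N^1$ of the function where Alice receives $m_1,m_3,\dots,m_{2n-1}\in M$, Bob receives $m_2,\dots,m_{2n}\in M$, with value $1$ iff $m_1\cdots m_{2n}\in I$; $N^1(M)(n)=\max_I N^1(M,I)(n)$ over all order ideals. Asymptotics are as $n\to\infty$. *)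

From mathcomp Require Import all_boot.
From Stdlib Require Import Reals.
Set Implicit Arguments. Unset Strict Implicit. Unset Printing Implicit Defensive.

Section Defs.
Variable M : finType.

Definition is_monoid (mul : M -> M -> M) (one : M) : Prop :=
  (forall x y z, mul x (mul y z) = mul (mul x y) z) /\
  (forall x, mul one x = x) /\ (forall x, mul x one = x).

Definition commutative_op (mul : M -> M -> M) : Prop :=
  forall x y, mul x y = mul y x.

Definition stable_order (mul : M -> M -> M) (le : rel M) : Prop :=
  (forall x, le x x) /\
  (forall x y, le x y -> le y x -> x = y) /\
  (forall x y z, le x y -> le y z -> le x z) /\
  (forall x y z, le x y -> le (mul z x) (mul z y) /\ le (mul x z) (mul y z)).

Definition is_ideal (le : rel M) (I : {set M}) : bool :=
  [forall x, forall y, ((y \in I) && le x y) ==> (x \in I)].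

Definition prod_seq (mul : M -> M -> M) (one : M) (s : seq M) : M :=
  foldr mul one s.

(* Interleaving: Alice's a = (m1,m3,...,m_{2n-1}), Bob's b = (m2,...,m_{2n}). *)
Definition interleave (n : nat) (a b : n.-tuple M) : seq M :=
  flatten [seq [:: tnth a i; tnth b i] | i <- enum 'I_n].

Definition word_fun (mul : M -> M -> M) (one : M) (I : {set M}) (n : nat)
  (a b : n.-tuple M) : bool :=
  prod_seq mul one (interleave a b) \in I.
End Defs.

Section Cover.
Variables X Y : finType.

Definition is_cover (f : X -> Y -> bool) (c : seq ({set X} * {set Y})) : bool :=
  all (fun r : {set X} * {set Y} => [forall x in r.1, forall y in r.2, f x y]) c &&
  [forall x, forall y, f x y ==> has (fun r : {set X} * {set Y} => (x \in r.1) && (y \in r.2)) c].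

(* C^1(f): the minimum number of 1-rectangles covering f^{-1}(1).
   The row cover {x} x {y | f x y} has #|X| rectangles, so #|X| is always
   attained and serves as the default of the minimum. *)
Definition C1 (f : X -> Y -> bool) : nat :=
  \big[minn/#|X|]_(k < #|X|.+1 |
      [exists c : k.-tuple ({set X} * {set Y}), is_cover f c]) (k : nat).
End Cover.

Definition C1M (M : finType) (mul : M -> M -> M) (one : M) (le : rel M) (n : nat) : nat :=
  \max_(I : {set M} | is_ideal le I) C1 (@word_fun M mul one I n).

Definition N1M (M : finType) (mul : M -> M -> M) (one : M) (le : rel M) (n : nat) : R :=
  (ln (INR (C1M mul one le n)) / ln 2)%R.

From Pilot Require Import Defs.
From mathcomp Require Import all_boot zify.
From Stdlib Require Import Reals Lra.

Set Implicit Arguments.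
Unset Strict Implicit.
Unset Printing Implicit Defensive.

(* Since M is not commutative and the order is antisymmetric, some a, b satisfy
   ab ≰ ba, and I := {x | ab ≰ x} is an order ideal containing ba but not ab.
   Let Alice hold a in round i+1 and Bob hold b in round j (the unit elsewhere):
   the product is ba if j <= i and ab otherwise, so the inputs form a fooling
   set of size n-1 for the "greater than" pattern.  Hence C^1 >= n-1 and
   N^1(M)(n) >= log2(n-1) >= log2(n)/2. *)

Section Covers.
Variables (X Y : finType) (f : X -> Y -> bool).

Lemma cover_rect_true {c : seq ({set X} * {set Y})} {r x y} :
  is_cover f c -> r \in c -> x \in r.1 -> y \in r.2 -> f x y.
Proof.
case/andP=> /allP rects _ /rects /forallP /(_ x) /implyP rx xr1.
by move: (rx xr1) => /forallP /(_ y) /implyP.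
Qed.

Lemma cover_has_rect (c : seq ({set X} * {set Y})) x y :
  is_cover f c -> f x y ->
  has (fun r : {set X} * {set Y} => (x \in r.1) && (y \in r.2)) c.
Proof. by case/andP=> _ /forallP /(_ x) /forallP /(_ y) /implyP. Qed.

Variables (m : nat) (xs : 'I_m -> X) (ys : 'I_m -> Y).
Hypothesis fooling_diag : forall i, f (xs i) (ys i).
Hypothesis fooling_offdiag :
  forall i j, i != j -> ~~ f (xs i) (ys j) || ~~ f (xs j) (ys i).

Lemma fooling_set_inj : injective xs.
Proof.
move=> i j xij; apply/eqP; apply: contraT => /fooling_offdiag.
by rewrite {1}xij -{2}xij !fooling_diag.
Qed.

Lemma fooling_set_cover_size (c : seq ({set X} * {set Y})) :
  is_cover f c -> m <= size c.
Proof.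
move=> cov.
pose P i := fun r : {set X} * {set Y} => (xs i \in r.1) && (ys i \in r.2).
have g_lt i : find (P i) c < size c by rewrite -has_find cover_has_rect.
pose g i := Ordinal (g_lt i).
suff /leq_card : injective g by rewrite !card_ord.
move=> i j /(congr1 val) /= gij; apply/eqP; apply: contraT => /fooling_offdiag.
set r := nth (set0, set0) c (find (P i) c).
have rc : r \in c by apply: mem_nth.
have /andP [xi yi] : P i r by apply: nth_find; rewrite has_find.
have /andP [xj yj] : P j r by rewrite /r gij; apply: nth_find; rewrite has_find.
by rewrite (cover_rect_true cov rc xi yj) (cover_rect_true cov rc xj yi).
Qed.

(* Qualified, since [C1] alone refers to the class-C^1 notion of Reals. *)
Lemma fooling_set_C1 : m <= Defs.C1 f.
Proof.
rewrite /Defs.C1; elim/big_ind: _ => [||k /existsP [c /fooling_set_cover_size]].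
- by rewrite -[m]card_ord; apply: leq_card fooling_set_inj.
- by move=> u v mu mv; rewrite leq_min mu mv.
- by rewrite size_tuple.
Qed.
End Covers.

Section Words.
Variables (M : finType) (mul : M -> M -> M) (one : M).
Hypothesis monoid_M : is_monoid mul one.

Definition delta_tuple (n p : nat) (x : M) : n.-tuple M :=
  [tuple if val t == p then x else one | t < n].

Lemma foldr_pair_delta_iota (a b : M) (p q k len : nat) :
  foldr (fun i acc => mul (if i == p then a else one)
          (mul (if i == q then b else one) acc)) one (iota k len) =
  if (k <= p < k + len) && (k <= q < k + len) then
    (if p <= q then mul a b else mul b a)
  else if k <= p < k + len then a else if k <= q < k + len then b else one.
Proof.
case: monoid_M => _ [mul1x mulx1].
elim: len k => [|len IH] k /=; first by rewrite addn0; repeat case: ifP => //; lia.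
by rewrite IH; repeat case: ifP => ?; rewrite ?mul1x ?mulx1 //; lia.
Qed.

Lemma prod_interleave_delta (n p q : nat) (a b : M) : p < n -> q < n ->
  prod_seq mul one (interleave (delta_tuple n p a) (delta_tuple n q b)) =
  if p <= q then mul a b else mul b a.
Proof.
move=> p_lt q_lt.
have -> : interleave (delta_tuple n p a) (delta_tuple n q b) =
    flatten [seq [:: if i == p then a else one; if i == q then b else one]
            | i <- iota 0 n].
  rewrite /interleave -val_enum_ord -[in RHS]map_comp; congr flatten.
  by apply: eq_map => t /=; rewrite !tnth_mktuple.
have foldr_flatten (s : seq nat) (F G : nat -> M) :
    foldr mul one (flatten [seq [:: F i; G i] | i <- s]) =
    foldr (fun i acc => mul (F i) (mul (G i) acc)) one s.
  by elim: s => //= i s ->.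
by rewrite /prod_seq foldr_flatten foldr_pair_delta_iota /= p_lt q_lt.
Qed.
End Words.

Section OrderedMonoid.
Variables (M : finType) (mul : M -> M -> M) (one : M) (le : rel M).

Lemma noncommutative_not_le_swap :
  (forall x y, le x y -> le y x -> x = y) -> ~ commutative_op mul ->
  exists a b, ~~ le (mul a b) (mul b a).
Proof.
move=> le_anti noncomm.
case: (boolP [forall x, forall y, le (mul x y) (mul y x)]) =>
  [/forallP all_le | /forallPn [x /forallPn [y not_le]]]; last by exists x, y.
case: noncomm => x y; apply: le_anti.
- exact: (forallP (all_le x)).
- exact: (forallP (all_le y)).
Qed.

Lemma is_ideal_not_ge (z : M) :
  (forall x y w, le x y -> le y w -> le x w) -> is_ideal le [set x | ~~ le z x].
Proof.
move=> le_trans; apply/forallP => x; apply/forallP => y; apply/implyP.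
rewrite !inE => /andP [not_zy le_xy]; apply: contra not_zy => le_zx.
exact: le_trans le_zx le_xy.
Qed.

Lemma C1M_ge_pred (a b : M) (n : nat) :
  is_monoid mul one -> stable_order mul le -> ~~ le (mul a b) (mul b a) ->
  n.-1 <= C1M mul one le n.
Proof.
move=> monoid_M [le_refl [_ [le_trans _]]] not_ab_ba.
apply: leq_trans (leq_bigmax_cond _ (is_ideal_not_ge (mul a b) le_trans)).
pose xs (i : 'I_n.-1) := delta_tuple one n i.+1 a.
pose ys (j : 'I_n.-1) := delta_tuple one n j b.
have word_fun_xy (i j : 'I_n.-1) :
    word_fun mul one [set x | ~~ le (mul a b) x] (xs i) (ys j) = (j <= i).
  have i_lt : i.+1 < n by rewrite -ltn_predRL.
  have j_lt : j < n := leq_trans (ltn_ord j) (leq_pred n).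
  rewrite /word_fun prod_interleave_delta // inE.
  by case: ltnP => _; rewrite ?le_refl ?not_ab_ba.
apply: (fooling_set_C1 (xs := xs) (ys := ys)) => [i | i j].
  by rewrite word_fun_xy.
by rewrite !word_fun_xy -!ltnNge; case: ltngtP => // /val_inj ->; rewrite eqxx.
Qed.
End OrderedMonoid.

Lemma ln_le_ln (x y : R) : (0 < x)%R -> (x <= y)%R -> (ln x <= ln y)%R.
Proof. by move=> x_gt0 [/(ln_increasing _ _ x_gt0) /Rlt_le | ->]; [|right]. Qed.

Lemma ln_le_2_ln_pred (n : nat) : 3 <= n -> (ln (INR n) <= 2 * ln (INR n.-1))%R.
Proof.
move=> n_ge3.
have pred_ge2 : (2 <= INR n.-1)%R by apply: (le_INR 2); apply/leP; lia.
have /le_INR : (n <= n.-1 * n.-1)%coq_nat by apply/leP; nia.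
rewrite mult_INR => n_le_sq.
rewrite (_ : 2 * _ = ln (INR n.-1 * INR n.-1))%R; last by rewrite ln_mult; lra.
by apply: ln_le_ln => //; apply: (lt_INR 0); apply/ltP; lia.
Qed.

Lemma half_log2_le_log2_pred (n C : nat) : 3 <= n -> n.-1 <= C ->
  (/ (2 * ln 2) * ln (INR n) <= ln (INR C) / ln 2)%R.
Proof.
move=> n_ge3 pred_le_C.
have ln2_gt0 : (0 < ln 2)%R by have := ln_lt_2; lra.
have ln_pred_le : (ln (INR n.-1) <= ln (INR C))%R.
  by apply: ln_le_ln; [apply: (lt_INR 0); apply/ltP; lia | apply/le_INR/leP].
have := ln_le_2_ln_pred n_ge3.
rewrite (_ : / (2 * ln 2) * _ = ln (INR n) / 2 / ln 2)%R; last by field; lra.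
move=> ln_n_le; apply: Rmult_le_compat_r; last lra.
by apply/Rlt_le/Rinv_0_lt_compat.
Qed.

Theorem mainTheorem6 (M : finType) (mul : M -> M -> M) (one : M)
  (hmon : is_monoid mul one) (hnc : ~ commutative_op mul)
  (le : rel M) (hle : stable_order mul le) :
  exists c : R, (0 < c)%R /\
    exists n0 : nat, forall n : nat, (n0 <= n)%N ->
      (c * ln (INR n) <= N1M mul one le n)%R.
Proof.
have [le_anti _] := hle.2.
have [a [b not_ab_ba]] := noncommutative_not_le_swap le_anti hnc.
exists (/ (2 * ln 2))%R; split.
  by apply: Rinv_0_lt_compat; have := ln_lt_2; lra.
exists 3 => n n_ge3; apply: half_log2_le_log2_pred => //.
exact: C1M_ge_pred hmon hle not_ab_ba.
Qed.
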